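(* There is an absolute constant $C>0$ such that the following holds. Let $\varepsilon\in(0,1/2]$ and let $A$ be an $n\times n$ random matrix with i.i.d. entries satisfying $\mathbb{E}A_{ij}^2\le1$ and such that almost surely each entry satisfies either $A_{ij}=0$ or $\sqrt n/2\le|A_{ij}|\le 5\sqrt n/\sqrt{\varepsilon}$. Then with probability at least $1-2\exp(-\varepsilon n/4)$ there exist $I,J\subset[n]$ with $|I|,|J|\le\varepsilon n$ such that the matrix $\tilde A$ obtained from $A$ by replacing all entries with indices in $I\times J$ by zero satisfies $$\|\tilde A\|\le\frac{C\ln(\varepsilon^{-1})}{\sqrt\varepsilon}\sqrt n.$$
   Context: $\|\cdot\|$ denotes the operator norm (Euclidean norm to Euclidean norm). *)

From HB Require Import structures.
From mathcomp Require Import all_boot all_order all_algebra.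
From mathcomp Require Import all_classical all_reals all_analysis.
Set Implicit Arguments. Unset Strict Implicit. Unset Printing Implicit Defensive.
Import Order.TTheory GRing.Theory Num.Theory.
Import numFieldNormedType.Exports.
Local Open Scope classical_set_scope.
Local Open Scope ring_scope.

Definition enorm (R : realType) (n : nat) (v : 'cV[R]_n) : R :=
  Num.sqrt (\sum_(i < n) v i 0 ^+ 2).

Definition opnorm (R : realType) (m n : nat) (M : 'M[R]_(m, n)) : R :=
  sup [set enorm (M *m x) | x in [set x : 'cV[R]_n | enorm x <= 1]].

(* Mutual independence of a finite family of real random variables:
   product rule for preimages of any family of Borel sets (taking B k = setT
   covers every subfamily). *)
Definition mutually_independent (d : measure_display) (T : measurableType d)
  (R : realType) (P : probability T R) (I : finType) (X : I -> T -> R) : Prop :=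
  forall B : I -> set R, (forall k, measurable (B k)) ->
    P (\bigcap_(k in [set: I]) (X k @^-1` B k)) = (\prod_(k : I) P (X k @^-1` B k))%E.

Definition identically_distributed (d : measure_display) (T : measurableType d)
  (R : realType) (P : probability T R) (I : Type) (X : I -> T -> R) : Prop :=
  forall k l (B : set R), measurable B -> P (X k @^-1` B) = P (X l @^-1` B).

Definition zero_block (R : realType) (n : nat) (M : 'M[R]_n) (I J : {set 'I_n}) : 'M[R]_n :=
  \matrix_(i, j) (if (i \in I) && (j \in J) then 0 else M i j).

From HB Require Import structures.
From mathcomp Require Import all_boot all_order all_algebra.
From mathcomp Require Import all_classical all_reals all_analysis.
From mathcomp Require Import measurable_realfun ring lra.
Import Order.TTheory GRing.Theory Num.Theory.
Import numFieldNormedType.Exports.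
Set Implicit Arguments. Unset Strict Implicit. Unset Printing Implicit Defensive.
Local Open Scope ring_scope.

(* A nonzero entry has modulus at least sqrt n / 2, so by the second-moment
   bound it is nonzero with probability at most q = 4/n.  Call a row heavy if it
   has more than D ~ ln(1/eps) nonzero entries.  If the heavy rows carry more than
   t = eps n / 2 nonzero entries, their supports form a witness: sets F_i, each
   empty or larger than D, of total size s > t, all of whose entries are nonzero,
   which by independence has probability at most q^s.  Since q^s <= e^{-t} (e q)^s,
   the sum over witnesses factorises over the rows and is at most e^{-eps n / 4}
   once D > ln(1/eps) + 4 e^2 + ln 4; the same holds for columns.  Outside these
   events let I be the heavy rows plus the supports of the heavy columns, and J
   the heavy columns plus the supports of the heavy rows.  Both have at most
   eps n elements, and every nonzero entry in a heavy row or column lies in I x J,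
   so after zeroing I x J each row and column has at most D nonzero entries, of
   modulus at most 5 sqrt n / sqrt eps; Schur's test bounds the operator norm by
   D times that. *)

Section arithmetic.
Variable R : realType.

Lemma exprD1_le_expR (x : R) (n : nat) : 0 <= 1 + x -> (1 + x) ^+ n <= expR (n%:R * x).
Proof.
by move=> x1; rewrite expRM_natl lerXn2r ?nnegrE ?expR_ge0 ?expR_ge1Dx.
Qed.

Lemma witness_bound_le_expR (n D : nat) (c q t : R) : 0 <= c -> 0 <= q -> q * n%:R <= 4 ->
  expR (- t) * (1 + expR (- D%:R) * (1 + c * q) ^+ n) ^+ n
  <= expR (n%:R * expR (4 * c - D%:R) - t).
Proof.
move=> c0 q0 qn.
have inner : (1 + c * q) ^+ n <= expR (4 * c).
  apply: le_trans (exprD1_le_expR n _) _; first by rewrite addr_ge0 ?mulr_ge0.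
  by rewrite ler_expR; nra.
have outer : expR (- D%:R) * (1 + c * q) ^+ n <= expR (4 * c - D%:R).
  by rewrite expRD [X in _ <= X]mulrC ler_wpM2l ?expR_ge0.
rewrite expRD mulrC ler_wpM2r ?expR_ge0 //.
apply: le_trans (exprD1_le_expR n _) _.
  by rewrite addr_ge0 ?mulr_ge0 ?expR_ge0 ?exprn_ge0 ?addr_ge0 ?mulr_ge0.
by rewrite ler_expR ler_wpM2l.
Qed.

Lemma le_ln_inv (x : R) : 0 < x -> 1 - x <= ln x^-1.
Proof.
move=> x0; rewrite lnV ?posrE //.
by have := expR_ge1Dx (ln x); rewrite lnK ?posrE //; lra.
Qed.

Lemma exists_degree_threshold (eps : R) : 0 < eps -> eps <= 1 / 2 ->
  exists D : nat, expR (4 * expR 1 ^+ 2 - D%:R) <= eps / 4 /\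
    D%:R <= (3 + 8 * expR 1 ^+ 2 + 2 * ln 4) * ln eps^-1.
Proof.
(* D is the least integer above L + 4 e^2 + ln 4, where L = ln(1/eps) >= 1/2. *)
move=> eps0 eps_half; set L := ln eps^-1; pose c : R := 4 * expR 1 ^+ 2 + ln 4.
have L_half : 1 / 2 <= L by apply: le_trans (le_ln_inv eps0); lra.
have c0 : 0 <= c by rewrite addr_ge0 ?mulr_ge0 ?exprn_ge0 ?expR_ge0 ?ln_ge0 //; lra.
have /andP[trunc_le lt_trunc] : (Num.truncn (L + c))%:R <= L + c < (Num.truncn (L + c)).+1%:R.
  by apply: truncn_itv; rewrite addr_ge0 //; lra.
exists (Num.truncn (L + c)).+1; split.
  have -> : eps / 4 = expR (- L - ln 4).
    by rewrite expRB /L lnV ?posrE // opprK !lnK ?posrE.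
  by rewrite ler_expR; move: lt_trunc; rewrite /c; lra.
by move: trunc_le; rewrite -natr1 /c; nra.
Qed.

End arithmetic.

Section heavy_witness.
Variables (R : realType) (I J : finType) (D : nat).

Lemma sum_expr_card_sets (c : R) : \sum_(G : {set J}) c ^+ #|G| = (1 + c) ^+ #|J|.
Proof.
rewrite addrC -prodr_const bigA_distr; apply: eq_bigr => G _.
by rewrite -big_mkcond /= prodr_const.
Qed.

Definition heavy_witness (t : R) (F : {ffun I -> {set J}}) : bool :=
  [forall i, (#|F i| == 0) || (D < #|F i|)]%N && (t < (\sum_i #|F i|)%:R).

Definition witness_weight (c : R) (G : {set J}) : R :=
  if #|G| == 0%N then 1 else expR (- D%:R) * c ^+ #|G|.

Lemma witness_weight_ge0 (c : R) (G : {set J}) : 0 <= c -> 0 <= witness_weight c G.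
Proof.
by move=> c0; rewrite /witness_weight; case: ifP => _; rewrite ?mulr_ge0 ?expR_ge0 ?exprn_ge0.
Qed.

Lemma expr_le_witness_weight (q : R) (G : {set J}) : 0 <= q -> ((#|G| == 0) || (D < #|G|))%N ->
  (expR 1 * q) ^+ #|G| <= witness_weight (expR 1 ^+ 2 * q) G.
Proof.
move=> q0; rewrite /witness_weight; case: ifP => [/eqP -> _|_ /= DG]; first by rewrite expr0.
have -> : (expR 1 ^+ 2 * q) ^+ #|G| = expR 1 ^+ #|G| * (expR 1 * q) ^+ #|G|.
  by rewrite -exprMn expr2 mulrA.
rewrite mulrA ler_peMl ?exprn_ge0 ?mulr_ge0 ?expR_ge0 //.
by rewrite -expRM_natl mulr1 -expRD -[X in X <= _]expR0 ler_expR addrC subr_ge0 ler_nat ltnW.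
Qed.

Lemma sum_witness_weight_le (c : R) : 0 <= c ->
  \sum_G witness_weight c G <= 1 + expR (- D%:R) * (1 + c) ^+ #|J|.
Proof.
move=> c0; rewrite (bigD1 finset.set0) //= /witness_weight cards0 eqxx lerD2l.
rewrite -sum_expr_card_sets big_distrr [X in _ <= X](bigD1 finset.set0) //= ler_wpDl //.
  by rewrite mulr_ge0 ?expR_ge0 ?exprn_ge0.
by apply: ler_sum => G; rewrite -cards_eq0 => /negbTE ->.
Qed.

Lemma heavy_witness_sum_le (q t : R) : 0 <= q ->
  \sum_(F | heavy_witness t F) q ^+ (\sum_i #|F i|)
  <= expR (- t) * (1 + expR (- D%:R) * (1 + expR 1 ^+ 2 * q) ^+ #|J|) ^+ #|I|.
Proof.
move=> q0; set c := expR 1 ^+ 2 * q.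
have c0 : 0 <= c by rewrite mulr_ge0 ?exprn_ge0 ?expR_ge0.
have weight_prod F : heavy_witness t F ->
    q ^+ (\sum_i #|F i|) <= expR (- t) * \prod_i witness_weight c (F i).
  case/andP => /forallP small_or_heavy t_lt.
  apply: (@le_trans _ _ (expR (- t) * \prod_i (expR 1 * q) ^+ #|F i|)).
    rewrite prodrXr exprMn mulrA ler_peMl ?exprn_ge0 //.
    by rewrite -expRM_natl mulr1 -expRD -[X in X <= _]expR0 ler_expR addrC subr_ge0 ltW.
  rewrite ler_wpM2l ?expR_ge0 //; apply: ler_prod => i _.
  by rewrite exprn_ge0 ?mulr_ge0 ?expR_ge0 ?expr_le_witness_weight.
apply: le_trans (ler_sum _ weight_prod) _.
apply: (@le_trans _ _ (\sum_(F : {ffun I -> {set J}}) expR (- t) * \prod_i witness_weight c (F i))).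
  rewrite [X in _ <= X](bigID (heavy_witness t)) /= lerDl.
  by apply: sumr_ge0 => F _; rewrite mulr_ge0 ?expR_ge0 // prodr_ge0 // => i _; rewrite witness_weight_ge0.
rewrite -big_distrr /= ler_wpM2l ?expR_ge0 //.
rewrite -(bigA_distr_bigA (fun (i : I) G => witness_weight c G)) /= prodr_const.
rewrite lerXn2r ?nnegrE ?sum_witness_weight_le //.
  by apply: sumr_ge0 => G _; rewrite witness_weight_ge0.
by rewrite addr_ge0 ?mulr_ge0 ?expR_ge0 ?exprn_ge0 ?addr_ge0.
Qed.

End heavy_witness.

Section patterns.
Variables (I J : finType) (F : {ffun I -> {set J}}).

Definition row_pattern : {set I * J} := [set k | k.2 \in F k.1].

Definition col_pattern : {set J * I} := [set k | k.1 \in F k.2].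

Lemma card_row_pattern : #|row_pattern| = (\sum_i #|F i|)%N.
Proof.
rewrite -sum1_card (eq_bigl (fun k : I * J => true && (k.2 \in F k.1))) => [|k]; last by rewrite inE.
rewrite -(pair_big_dep xpredT (fun i j => j \in F i) (fun _ _ => 1%N)) /=.
by apply: eq_bigr => i _; rewrite sum1_card.
Qed.

Lemma card_col_pattern : #|col_pattern| = (\sum_i #|F i|)%N.
Proof.
have -> : col_pattern = [set (k.2, k.1) | k in row_pattern].
  apply/setP => -[j i]; rewrite inE; apply/idP/imsetP => [Fij|[[i' j'] + [-> ->]]].
    by exists (i, j); rewrite ?inE.
  by rewrite inE.
by rewrite card_imset ?card_row_pattern // => -[? ?] [? ?] [-> ->].
Qed.

End patterns.

Section sparse_opnorm.
Variable R : realType.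

Lemma sqr_sum_le (I : finType) (S : {set I}) (a : I -> R) :
  (\sum_(j in S) a j) ^+ 2 <= #|S|%:R * \sum_(j in S) a j ^+ 2.
Proof.
have amgm j k : a j * a k <= (a j ^+ 2 + a k ^+ 2) / 2.
  rewrite ler_pdivlMr // -subr_ge0.
  have -> : a j ^+ 2 + a k ^+ 2 - a j * a k * 2 = (a j - a k) ^+ 2 by ring.
  exact: sqr_ge0.
rewrite expr2 big_distrl /=.
apply: (@le_trans _ _ (\sum_(j in S) \sum_(k in S) (a j ^+ 2 + a k ^+ 2) / 2)).
  by apply: ler_sum => j _; rewrite big_distrr /=; apply: ler_sum => k _; exact: amgm.
rewrite (eq_bigr (fun j => (\sum_(k in S) a j ^+ 2 + \sum_(k in S) a k ^+ 2) / 2));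
  last by move=> j _; rewrite -big_distrl /= big_split.
rewrite -big_distrl /= big_split /= [X in (_ + X) / 2]exchange_big /=.
rewrite mulrDl -splitr.
under eq_bigr => j _ do rewrite sumr_const.
by rewrite sumrMnl mulr_natl.
Qed.

Definition row_support (m n : nat) (M : 'M[R]_(m, n)) (i : 'I_m) : {set 'I_n} :=
  [set j | M i j != 0].

Lemma sqr_mulmx_le (m n D : nat) (K : R) (M : 'M[R]_(m, n)) (x : 'cV[R]_n) i :
  (forall j, `|M i j| <= K) -> (#|row_support M i| <= D)%N ->
  (M *m x) i 0 ^+ 2 <= D%:R * \sum_(j in row_support M i) K ^+ 2 * x j 0 ^+ 2.
Proof.
move=> MK rowD; rewrite mxE (bigID (mem (row_support M i))) /=.
rewrite [X in _ + X]big1 ?addr0; last by move=> j; rewrite inE negbK => /eqP ->; rewrite mul0r.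
apply: le_trans (sqr_sum_le _ _) _.
apply: ler_pM; rewrite ?ler_nat //; first by apply: sumr_ge0 => j _; exact: sqr_ge0.
apply: ler_sum => j _.
rewrite exprMn ler_wpM2r ?sqr_ge0 // -real_normK ?num_real // lerXn2r ?nnegrE //.
exact: le_trans (normr_ge0 _) (MK j).
Qed.

Lemma sumsqr_mulmx_le (m n D : nat) (K : R) (M : 'M[R]_(m, n)) (x : 'cV[R]_n) :
  (forall i j, `|M i j| <= K) ->
  (forall i, #|row_support M i| <= D)%N -> (forall j, #|row_support M^T j| <= D)%N ->
  \sum_i (M *m x) i 0 ^+ 2 <= (D%:R * K) ^+ 2 * \sum_j x j 0 ^+ 2.
Proof.
move=> MK rowD colD.
apply: le_trans (ler_sum _ (fun i _ => sqr_mulmx_le x (MK i) (rowD i))) _.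
rewrite -big_distrr /=.
have -> : \sum_i \sum_(j in row_support M i) K ^+ 2 * x j 0 ^+ 2
    = \sum_j #|row_support M^T j|%:R * (K ^+ 2 * x j 0 ^+ 2).
  rewrite (eq_bigr (fun i => \sum_j if j \in row_support M i then K ^+ 2 * x j 0 ^+ 2 else 0));
    last by move=> i _; rewrite big_mkcond.
  rewrite exchange_big /=; apply: eq_bigr => j _; rewrite -big_mkcond /=.
  rewrite (eq_bigl (mem (row_support M^T j))) ?sumr_const ?mulr_natl // => i.
  by rewrite !inE mxE.
apply: (@le_trans _ _ (D%:R * \sum_j D%:R * (K ^+ 2 * x j 0 ^+ 2))).
  rewrite ler_wpM2l //; apply: ler_sum => j _.
  by rewrite ler_wpM2r ?ler_nat // mulr_ge0 ?sqr_ge0.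
by rewrite -big_distrr -big_distrr /= exprMn !mulrA -expr2.
Qed.

Lemma opnorm_le_sparse (m n D : nat) (K : R) (M : 'M[R]_(m, n)) : 0 <= K ->
  (forall i j, `|M i j| <= K) ->
  (forall i, #|row_support M i| <= D)%N -> (forall j, #|row_support M^T j| <= D)%N ->
  opnorm M <= D%:R * K.
Proof.
move=> K0 MK rowD colD; apply: ge_sup.
  exists (enorm (M *m 0)), 0 => //.
  by rewrite /= /enorm big1 ?sqrtr0 // => i _; rewrite mxE expr0n.
move=> _ [x /= x1 <-]; rewrite /enorm.
have s0 : 0 <= \sum_j x j 0 ^+ 2 by apply: sumr_ge0 => j _; rewrite sqr_ge0.
apply: (@le_trans _ _ (Num.sqrt ((D%:R * K) ^+ 2 * \sum_j x j 0 ^+ 2))).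
  by rewrite ler_sqrt ?mulr_ge0 ?sqr_ge0 // sumsqr_mulmx_le.
rewrite sqrtrM ?sqr_ge0 // sqrtr_sqr ger0_norm ?mulr_ge0 //.
by rewrite ler_piMr ?mulr_ge0.
Qed.

End sparse_opnorm.

Lemma card_bigcup_le (I T : finType) (P : pred I) (F : I -> {set T}) :
  (#|\bigcup_(i | P i) F i| <= \sum_(i | P i) #|F i|)%N.
Proof.
elim/big_rec2: _ => [|i A m _ IH]; first by rewrite cards0.
by apply: leq_trans (leq_card_setU _ _).1 _; rewrite leq_add2l.
Qed.


Section pruning.
Variables (R : realType) (n D : nat).
Implicit Types M : 'M[R]_n.

Definition heavy_rows M : {set 'I_n} := [set i | D < #|row_support M i|]%N.

Definition heavy_mass M : nat := \sum_(i in heavy_rows M) #|row_support M i|.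

Definition pruned_rows M : {set 'I_n} :=
  heavy_rows M :|: \bigcup_(j in heavy_rows M^T) row_support M^T j.

Definition pruned_cols M : {set 'I_n} := pruned_rows M^T.

Definition prune M : 'M[R]_n := zero_block M (pruned_rows M) (pruned_cols M).

Lemma card_heavy_rows_le M : (#|heavy_rows M| <= heavy_mass M)%N.
Proof.
rewrite -sum1_card; apply: leq_sum => i; rewrite inE => heavy.
exact: leq_ltn_trans (leq0n D) heavy.
Qed.

Lemma card_pruned_rows M : (#|pruned_rows M| <= heavy_mass M + heavy_mass M^T)%N.
Proof.
apply: leq_trans (leq_card_setU _ _).1 _.
by rewrite leq_add ?card_heavy_rows_le ?card_bigcup_le.
Qed.

Lemma card_pruned_cols M : (#|pruned_cols M| <= heavy_mass M + heavy_mass M^T)%N.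
Proof. by rewrite addnC -[in heavy_mass M](trmxK M) card_pruned_rows. Qed.

Lemma trmx_zero_block M (I J : {set 'I_n}) : (zero_block M I J)^T = zero_block M^T J I.
Proof. by apply/matrixP => i j; rewrite !mxE andbC. Qed.

Lemma trmx_prune M : (prune M)^T = prune M^T.
Proof. by rewrite /prune trmx_zero_block /pruned_cols trmxK. Qed.

Lemma prune_neq0 M i j : prune M i j != 0 -> (M i j != 0) && (i \notin heavy_rows M).
Proof.
rewrite /prune /zero_block mxE; case: ifP => [_|kept]; first by rewrite eqxx.
move=> Mij; rewrite Mij; apply: contraFN kept => heavy.
rewrite /pruned_cols /pruned_rows trmxK !finset.in_setU heavy /=.
by apply/orP; right; apply/bigcupP; exists i; rewrite // inE.
Qed.

Lemma card_row_support_prune M i : (#|row_support (prune M) i| <= D)%N.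
Proof.
have [heavy|light] := boolP (i \in heavy_rows M).
  rewrite (_ : row_support _ i = finset.set0) ?cards0 //.
  apply/setP => j; rewrite !inE; apply/negbTE/negP => /prune_neq0.
  by rewrite heavy andbF.
apply: leq_trans (_ : #|row_support M i| <= D)%N.
  by apply/subset_leq_card/fintype.subsetP => j; rewrite !inE => /prune_neq0 /andP[].
by move: light; rewrite inE -leqNgt.
Qed.

Lemma card_col_support_prune M j : (#|row_support (prune M)^T j| <= D)%N.
Proof. by rewrite trmx_prune card_row_support_prune. Qed.

Lemma opnorm_prune_le M (K : R) : 0 <= K -> (forall i j, `|M i j| <= K) ->
  opnorm (prune M) <= D%:R * K.
Proof.
move=> K0 MK; apply: opnorm_le_sparse => //.
- by move=> i j; rewrite /prune /zero_block mxE; case: ifP; rewrite ?normr0.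
- exact: card_row_support_prune.
- exact: card_col_support_prune.
Qed.

Lemma exists_heavy_witness M (t : R) : t < (heavy_mass M)%:R ->
  exists2 F : {ffun 'I_n -> {set 'I_n}}, heavy_witness D t F & forall i j, j \in F i -> M i j != 0.
Proof.
move=> mass_gt; exists [ffun i => if i \in heavy_rows M then row_support M i else finset.set0].
  apply/andP; split.
    apply/forallP => i; rewrite ffunE; case: ifP => [|_]; last by rewrite cards0.
    by rewrite inE => ->; rewrite orbT.
  rewrite (_ : (\sum_i _)%N = heavy_mass M) // /heavy_mass [RHS]big_mkcond.
  by apply: eq_bigr => i _; rewrite ffunE; case: ifP; rewrite ?cards0.
by move=> i j; rewrite ffunE; case: ifP => _; rewrite inE.
Qed.

Lemma exists_sparse_zero_block M (K t : R) : 0 <= K -> (forall i j, `|M i j| <= K) ->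
  (heavy_mass M)%:R <= t -> (heavy_mass M^T)%:R <= t ->
  exists I J : {set 'I_n}, [/\ #|I|%:R <= 2 * t, #|J|%:R <= 2 * t &
    opnorm (zero_block M I J) <= D%:R * K].
Proof.
move=> K0 MK rows cols; exists (pruned_rows M), (pruned_cols M); split.
- apply: (@le_trans _ _ (heavy_mass M + heavy_mass M^T)%:R); last by rewrite natrD; lra.
  by rewrite ler_nat card_pruned_rows.
- apply: (@le_trans _ _ (heavy_mass M + heavy_mass M^T)%:R); last by rewrite natrD; lra.
  by rewrite ler_nat card_pruned_cols.
- exact: opnorm_prune_le.
Qed.

End pruning.

Local Open Scope classical_set_scope.

Section measure_lemmas.
Context d (T : measurableType d) (R : realType) (mu : {measure set T -> \bar R}).

Lemma le_measure_bigsetU (I : finType) (Pr : pred I) (E : I -> set T) :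
  (forall i, measurable (E i)) ->
  (mu (\big[setU/set0]_(i | Pr i) E i) <= \sum_(i | Pr i) mu (E i))%E.
Proof.
move=> mE; suff [] : measurable (\big[setU/set0]_(i | Pr i) E i) /\
    (mu (\big[setU/set0]_(i | Pr i) E i) <= \sum_(i | Pr i) mu (E i))%E by [].
elim/big_rec2: _ => [|i X y _ [mX muX]]; first by rewrite measure0.
split; first exact: measurableU.
by apply: le_trans (measureU2 _ _ _) _ => //; exact: leeD2l.
Qed.

Lemma sqr_mul_measure_neq0_le_integral (X : T -> R) (a : R) : 0 < a -> measurable_fun setT X ->
  {ae mu, forall w, X w = 0 \/ a <= `|X w|} ->
  ((a ^+ 2)%:E * mu (X @^-1` [set~ 0%R]) <= \int[mu]_w (X w ^+ 2)%:E)%E.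
Proof.
move=> a0 mX [N [mN N0 dichotomy]].
have mX2 : measurable_fun setT (fun w => (X w ^+ 2)%:E).
  by apply/measurable_EFinP; exact: measurable_funX.
set large := setT `&` [set w | ((a ^+ 2)%:E <= `|(X w ^+ 2)%:E|)%E].
have mlarge : measurable large.
  by apply: emeasurable_fun_c_infty => //; exact: measurableT_comp.
have mZ : measurable (X @^-1` [set~ 0]).
  by rewrite -[_ @^-1` _]setTI; apply: mX => //; apply: measurableC.
have sub : X @^-1` [set~ 0] `<=` large `|` N.
  move=> w /= Xw; have [Nw|nNw] := pselect (N w); [by right | left; split => //].
  have [//|aX] : X w = 0 \/ a <= `|X w| by apply: contrapT => nd; apply: nNw; apply: dichotomy.
  by rewrite /= lee_fin normrX lerXn2r ?nnegrE ?normr_ge0 ?(ltW a0).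
apply: (@le_trans _ _ ((a ^+ 2)%:E * mu large)%E).
  rewrite lee_pmul2l ?lte_fin ?exprn_gt0 //.
  rewrite -(measureU0 mlarge mN N0); apply: le_measure; rewrite ?inE //.
  exact: measurableU.
have markov := le_integral_abse mu measurableT mX2 (exprn_gt0 2 a0).
rewrite (eq_integral (fun w => (X w ^+ 2)%:E)) in markov => // w _.
by rewrite gee0_abs ?lee_fin ?sqr_ge0.
Qed.

Lemma measure_neq0_le (X : T -> R) (a : R) : 0 < a -> measurable_fun setT X ->
  (\int[mu]_w (X w ^+ 2)%:E <= 1)%E -> {ae mu, forall w, X w = 0 \/ a <= `|X w|} ->
  (mu (X @^-1` [set~ 0%R]) <= (a ^- 2)%:E)%E.
Proof.
move=> a0 mX int1 dichotomy.
rewrite -(@lee_pmul2l _ (a ^+ 2)%:E) ?lte_fin ?exprn_gt0 // -EFinM mulfV ?expf_neq0 ?gt_eqF //.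
exact: le_trans (sqr_mul_measure_neq0_le_integral a0 mX dichotomy) int1.
Qed.

End measure_lemmas.

Section independent_support.
Context d (T : measurableType d) (R : realType) (P : probability T R).
Variables (I : finType) (X : I -> T -> R).
Hypotheses (mX : forall k, measurable_fun setT (X k)) (indep : mutually_independent P X).

Definition nonzero_on (S : {set I}) : set T :=
  \bigcap_(k in [set: I]) X k @^-1` (if k \in S then [set~ 0] else setT).

Lemma measurable_preimage k (B : set R) : measurable B -> measurable (X k @^-1` B).
Proof. by move=> mB; rewrite -[_ @^-1` _]setTI; exact: mX. Qed.

Lemma measurable_nonzero_on (S : {set I}) : measurable (nonzero_on S).
Proof.
apply: fin_bigcap_measurable; first exact: finite_finset.
by move=> k _; apply: measurable_preimage; case: ifP => _ //; exact: measurableC.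
Qed.

Lemma nonzero_onW (S : {set I}) w : (forall k, k \in S -> X k w != 0) -> nonzero_on S w.
Proof. by move=> nz k _ /=; case: ifP => // /nz /eqP. Qed.

Lemma prob_nonzero_on_le (q : R) (S : {set I}) :
  (forall k, P (X k @^-1` [set~ 0%R]) <= q%:E)%E ->
  (P (nonzero_on S) <= (q ^+ #|S|)%:E)%E.
Proof.
move=> Pq; pose B k := if k \in S then [set~ 0 : R] else setT.
have mB k : measurable (X k @^-1` B k).
  by apply: measurable_preimage; rewrite /B; case: ifP => _ //; exact: measurableC.
rewrite /nonzero_on indep; last by move=> k; rewrite /B; case: ifP => _ //; exact: measurableC.
rewrite (eq_bigr (fun k => (fine (P (X k @^-1` B k)))%:E)); last first.
  by move=> k _; rewrite fineK ?fin_num_measure.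
rewrite prodEFin lee_fin -prodr_const [X in _ <= X]big_mkcond /=; apply: ler_prod => k _.
rewrite fine_ge0 ?measure_ge0 //= -lee_fin fineK ?fin_num_measure // /B.
by case: ifP => _; rewrite ?Pq // preimage_setT probability_setT.
Qed.

End independent_support.

Section random_matrix.
Context d (T : measurableType d) (R : realType) (P : probability T R).
Variables (n : nat) (A : 'I_n -> 'I_n -> T -> R).
Hypotheses (mA : forall i j, measurable_fun setT (A i j))
  (indep : mutually_independent P (fun k : 'I_n * 'I_n => A k.1 k.2)).

Let X (k : 'I_n * 'I_n) := A k.1 k.2.
Let mX k : measurable_fun setT (X k) := mA k.1 k.2.

Definition heavy_event (D : nat) (t : R) : set T :=
  \big[setU/set0]_(F | heavy_witness D t F)
    (nonzero_on X (row_pattern F) `|` nonzero_on X (col_pattern F)).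

Lemma measurable_heavy_event D t : measurable (heavy_event D t).
Proof.
by apply: bigsetU_measurable => F _; apply: measurableU; exact: measurable_nonzero_on.
Qed.

Lemma prob_heavy_event_le D t (q : R) :
  (forall i j, P (A i j @^-1` [set~ 0%R]) <= q%:E)%E ->
  (P (heavy_event D t)
   <= (2 * \sum_(F : {ffun 'I_n -> {set 'I_n}} | heavy_witness D t F) q ^+ (\sum_i #|F i|))%:E)%E.
Proof.
move=> Pq; have PXq k : (P (X k @^-1` [set~ 0%R]) <= q%:E)%E := Pq k.1 k.2.
apply: le_trans (le_measure_bigsetU _ _ _) _.
  by move=> F; apply: measurableU; exact: measurable_nonzero_on.
rewrite big_distrr -sumEFin; apply: lee_sum => F _.
apply: le_trans (measureU2 _ _ _) _; try exact: measurable_nonzero_on.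
rewrite /= mulr_natl mulr2n EFinD leeD //.
- by rewrite -card_row_pattern; exact: prob_nonzero_on_le.
- by rewrite -card_col_pattern; exact: prob_nonzero_on_le.
Qed.

Lemma heavy_mass_le_notin_heavy_event D t w : ~ heavy_event D t w ->
  (heavy_mass D (\matrix_(i, j) A i j w))%:R <= t /\
  (heavy_mass D (\matrix_(i, j) A i j w)^T)%:R <= t.
Proof.
move=> notin; split; rewrite leNgt; apply/negP => /exists_heavy_witness [F witness supp];
  apply: notin; rewrite /heavy_event (bigD1 F) //=; left.
- by left; apply: nonzero_onW => k; rewrite inE => /supp; rewrite mxE.
- by right; apply: nonzero_onW => k; rewrite inE => /supp; rewrite !mxE.
Qed.

Lemma prob_heavy_event_le_expR D (eps q : R) : 0 <= q -> q * n%:R <= 4 ->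
  expR (4 * expR 1 ^+ 2 - D%:R) <= eps / 4 ->
  (forall i j, P (A i j @^-1` [set~ 0%R]) <= q%:E)%E ->
  (P (heavy_event D (eps * n%:R / 2)) <= (2 * expR (- (eps * n%:R) / 4))%:E)%E.
Proof.
move=> q0 qn tail Pq; apply: le_trans (prob_heavy_event_le _ _ Pq) _.
rewrite lee_fin ler_wpM2l //; apply: le_trans (heavy_witness_sum_le _ _ _ _ q0) _.
rewrite !card_ord; apply: le_trans (witness_bound_le_expR _ _ _ q0 qn) _.
  by rewrite exprn_ge0 ?expR_ge0.
rewrite ler_expR; have n0 : 0 <= n%:R :> R by [].
have : n%:R * expR (4 * expR 1 ^+ 2 - D%:R) <= n%:R * (eps / 4) by rewrite ler_wpM2l.
lra.
Qed.

Lemma exists_light_event D (eps q K : R) : 0 <= q -> q * n%:R <= 4 ->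
  expR (4 * expR 1 ^+ 2 - D%:R) <= eps / 4 ->
  (forall i j, P (A i j @^-1` [set~ 0%R]) <= q%:E)%E ->
  {ae P, forall w i j, `|A i j w| <= K} ->
  exists E : set T, [/\ measurable E, (P E >= (1 - 2 * expR (- (eps * n%:R) / 4))%:E)%E &
    forall w, E w -> let M := \matrix_(i, j) A i j w in
      [/\ (heavy_mass D M)%:R <= eps * n%:R / 2, (heavy_mass D M^T)%:R <= eps * n%:R / 2 &
          forall i j, `|M i j| <= K]].
Proof.
move=> q0 qn tail Pq [N [mN N0 unbounded]].
have Pheavy := prob_heavy_event_le_expR q0 qn tail Pq.
have mheavy := measurable_heavy_event D (eps * n%:R / 2).
exists (~` (heavy_event D (eps * n%:R / 2) `|` N)); split.
- exact/measurableC/measurableU.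
- rewrite probability_setC ?measureU0 //; last exact: measurableU.
  by rewrite EFinB; apply: leeB.
move=> w /not_orP[/heavy_mass_le_notin_heavy_event[rows cols] bounded]; split => // i j.
by rewrite mxE; move: i j; apply: contrapT => /unbounded.
Qed.

End random_matrix.

Theorem mainTheorem16 (R : realType) :
  exists C : R, 0 < C /\
  forall (n : nat) (eps : R), 0 < eps -> eps <= 1 / 2 ->
  forall (d : measure_display) (T : measurableType d) (P : probability T R)
         (A : 'I_n -> 'I_n -> T -> R),
    (forall i j, measurable_fun setT (A i j)) ->
    mutually_independent P (fun k : 'I_n * 'I_n => A k.1 k.2) ->
    identically_distributed P (fun k : 'I_n * 'I_n => A k.1 k.2) ->
    (forall i j, (\int[P]_w ((A i j w) ^+ 2)%:E <= 1)%E) ->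
    (forall i j, {ae P, forall w, A i j w = 0 \/
        (Num.sqrt n%:R / 2 <= `|A i j w| /\
         `|A i j w| <= 5 * Num.sqrt n%:R / Num.sqrt eps)}) ->
    exists E : set T, measurable E /\
      (P E >= (1 - 2 * expR (- (eps * n%:R) / 4))%:E)%E /\
      forall w, E w ->
        exists I J : {set 'I_n},
          [/\ (#|I|%:R <= eps * n%:R), (#|J|%:R <= eps * n%:R) &
              opnorm (zero_block (\matrix_(i, j) A i j w) I J)
                <= C * ln (eps^-1) / Num.sqrt eps * Num.sqrt n%:R].
Proof.
pose c : R := 3 + 8 * expR 1 ^+ 2 + 2 * ln 4.
have c0 : 0 < c.
  have := ln_ge0 (_ : 1 <= 4 :> R); have := exprn_ge0 2 (expR_ge0 (1 : R)); rewrite /c; lra.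
exists (5 * c); split; first by rewrite mulr_gt0.
move=> n eps eps0 eps_half d T P A mA indep _ moment dichotomy.
have [D [tail D_le]] := exists_degree_threshold eps0 eps_half.
set K := 5 * Num.sqrt n%:R / Num.sqrt eps.
have Pq i j : (P (A i j @^-1` [set~ 0%R]) <= (4 / n%:R)%:E)%E.
  have n0 : 0 < n%:R :> R by rewrite ltr0n (leq_ltn_trans _ (ltn_ord i)).
  have -> : 4 / n%:R = (Num.sqrt n%:R / 2) ^- 2 :> R.
    by rewrite expr_div_n sqr_sqrtr ?ltW // invf_div -natrX.
  apply: measure_neq0_le => //; first by rewrite divr_gt0 ?sqrtr_gt0.
  by apply: filterS (dichotomy i j) => w [->|[? _]]; [left|right].
have qn : 4 / n%:R * n%:R <= 4 :> R.
  by have [->|n0] := eqVneq n 0%N; rewrite ?mulr0 ?divfK ?pnatr_eq0.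
have K0 : 0 <= K by rewrite /K !mulr_ge0 ?invr_ge0 ?sqrtr_ge0.
have bounded : {ae P, forall w i j, `|A i j w| <= K}.
  apply: filter_forall => i; apply: filter_forall => j.
  by apply: filterS (dichotomy i j) => w [->|[_ AK]]; rewrite ?normr0.
have [E [mE PE light]] := exists_light_event mA indep (divr_ge0 (ler0n _ 4) (ler0n _ n)) qn tail Pq bounded.
exists E; split => //; split => // w /light[rows cols MK].
have [I [J [cardI cardJ norm]]] := exists_sparse_zero_block K0 MK rows cols.
exists I, J; split; [lra | lra | apply: le_trans norm _].
have -> : 5 * c * ln eps^-1 / Num.sqrt eps * Num.sqrt n%:R = c * ln eps^-1 * K by rewrite /K; ring.
by rewrite ler_wpM2r.
Qed.
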